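(* Let $B_n$ be the number of bidirectional ballot sequences of length $n$. Then $B_n=O(2^n/n)$.
   Context: A 0-1 sequence of length $n$ is a bidirectional ballot sequence if every nonempty prefix and every nonempty suffix of it contains strictly more 1's than 0's. *)

From mathcomp Require Import all_boot.
Set Implicit Arguments. Unset Strict Implicit. Unset Printing Implicit Defensive.

(* 1 = true, 0 = false *)
Definition more_ones (s : seq bool) : bool := count id s > count negb s.

Definition bidir_ballot (s : seq bool) : bool :=
  [forall k : 'I_(size s).+1,
     (0 < k) ==> more_ones (take k s) && more_ones (drop (size s - k) s)].

Definition B (n : nat) : nat := #|[set t : n.-tuple bool | bidir_ballot t]|.

From mathcomp Require Import all_boot zify ring.

(* Cutting a bidirectional ballot sequence of length n after its first a = n/2
   letters gives a prefix of length a all of whose nonempty prefixes have more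
   1's than 0's, and a suffix whose reversal has the same property.  So B_n is at
   most P_a * P_(n-a), where P_m counts such "prefix ballot" sequences.  Viewing a
   sequence as a +-1 walk, the reflection principle gives P_(m+1) = C(m, ceil(m/2)),
   and C(m, ceil(m/2))^2 (m+1) <= 4^m; hence n P_a P_(n-a) = O(2^n). *)

(* The +-1 walk from height [h] driven by [s] (true = up) stays at height >= 1
   after every step. *)
Fixpoint pos_walk (h : nat) (s : seq bool) : bool :=
  if s is b :: s' then
    if b then pos_walk h.+1 s' else (1 < h) && pos_walk h.-1 s'
  else true.

Lemma pos_walk_take h s :
  (forall k, 0 < k <= size s -> count negb (take k s) < h + count id (take k s)) ->
  pos_walk h s.
Proof.
elim: s h => [//|b s IH] h prefix_ok /=.
have prefix_okS k : 0 < k <= size s ->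
    count negb (take k.+1 (b :: s)) < h + count id (take k.+1 (b :: s)).
  by move=> k_range; apply: prefix_ok; rewrite /=; lia.
case: b prefix_ok prefix_okS => prefix_ok prefix_okS.
  by apply: IH => k /prefix_okS /=; lia.
have h_gt1 : 1 < h by have := prefix_ok 1; rewrite /= take0 /=; lia.
by rewrite h_gt1; apply: IH => k /prefix_okS /=; lia.
Qed.

Lemma card_tuple_cons m (P : pred (seq bool)) :
  #|[set t : m.+1.-tuple bool | P t]| =
  #|[set t : m.-tuple bool | P (true :: t)]| + #|[set t : m.-tuple bool | P (false :: t)]|.
Proof.
have cons_inj b : injective (fun t : m.-tuple bool => [tuple of b :: t]).
  by move=> t1 t2 /(congr1 (fun u => behead (val u))) /val_inj.
have card_head b : #|[set t : m.+1.-tuple bool | P t & thead t == b]| =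
                   #|[set t : m.-tuple bool | P (b :: t)]|.
  rewrite -(card_imset _ (cons_inj b)); apply: eq_card => t.
  case/tupleP: t => c t; rewrite !inE theadE.
  apply/andP/imsetP => [[Pt /eqP <-]|[u]]; first by exists t; rewrite ?inE.
  by rewrite inE => Pu /(congr1 val) [-> /val_inj ->].
rewrite -(cardsID [set t : m.+1.-tuple bool | thead t]) -!card_head.
by congr (_ + _); apply: eq_card => t; rewrite !inE; case: (thead t); rewrite ?andbT ?andbF.
Qed.

Lemma sum_mul_binS (f : nat -> nat) m :
  \sum_(x < m.+2) f x * 'C(m.+1, x) = \sum_(x < m.+1) (f x + f x.+1) * 'C(m, x).
Proof.
rewrite big_ord_recl bin0 -(bin0 m).
under eq_bigr do rewrite binS mulnDr.
under [RHS]eq_bigr do rewrite mulnDl.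
rewrite !big_split /= addnA; congr (_ + _).
rewrite -(big_ord_recl _ (fun i : 'I_m.+2 => f i * 'C(m, i))) big_ord_recr /=.
by rewrite bin_small ?muln0 ?addn0.
Qed.

(* A walk of length m from height h > 0 with x up-steps ends at height h + 2x - m.
   By reflection in height 0, the walks that stay positive are equinumerous with
   all walks ending in [1, 2h]; [reflection_sum] counts the latter. *)
Definition in_window (h m x : nat) : bool := 0 < h + x.*2 - m <= h.*2.

Definition reflection_sum (h m : nat) : nat :=
  \sum_(x < m.+1) in_window h m x * 'C(m, x).

Lemma reflection_sumS h m :
  0 < h -> reflection_sum h m.+1 = reflection_sum h.+1 m + reflection_sum h.-1 m.
Proof.
move=> h_gt0; rewrite /reflection_sum (sum_mul_binS (in_window h m.+1)) -big_split.
by apply: eq_bigr => x _; rewrite /= -mulnDl /in_window; congr (_ * _); lia.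
Qed.

Lemma reflection_sum0 m : reflection_sum 0 m = 0.
Proof. by apply: big1 => x _; rewrite /in_window; lia. Qed.

Lemma reflection_sum1 m : reflection_sum 1 m = 'C(m, uphalf m).
Proof.
have hm : uphalf m < m.+1 by rewrite ltn_uphalf_double; lia.
have m_halves := odd_double_half m; rewrite uphalf_half in hm *.
rewrite /reflection_sum (bigD1 (Ordinal hm)) //= big1 => [|x /eqP x_ne].
  by rewrite /in_window; case: odd m_halves => /=; lia.
have {}x_ne : x != odd m + m./2 :> nat by apply/eqP => x_eq; apply: x_ne; apply: val_inj.
by rewrite /in_window; case: odd m_halves x_ne => /=; lia.
Qed.

Lemma card_pos_walk h m :
  0 < h -> #|[set t : m.-tuple bool | pos_walk h t]| = reflection_sum h m.
Proof.
elim: m h => [|m IH] h h_gt0.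
  have -> : [set t : 0.-tuple bool | pos_walk h t] = setT.
    by apply/setP => t; rewrite !inE tuple0.
  by rewrite cardsT card_tuple /reflection_sum big_ord1 /in_window /= bin0; lia.
rewrite (card_tuple_cons m (pos_walk h)) reflection_sumS //= IH //; congr (_ + _).
case: h h_gt0 => [|[|h]] //= _; last by rewrite -IH //; apply: eq_card => t; rewrite !inE.
by rewrite reflection_sum0; apply/eqP; rewrite cards_eq0; apply/eqP/setP => t; rewrite !inE.
Qed.

Definition ballot_prefix_count (m : nat) : nat := #|[set t : m.-tuple bool | pos_walk 0 t]|.

Lemma ballot_prefix_countS m : ballot_prefix_count m.+1 = 'C(m, uphalf m).
Proof.
rewrite /ballot_prefix_count (card_tuple_cons m (pos_walk 0)) /= -reflection_sum1 -card_pos_walk //.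
rewrite [X in _ + X](_ : _ = 0) ?addn0 //.
by apply/eqP; rewrite cards_eq0; apply/eqP/setP => t; rewrite !inE.
Qed.

Lemma bin_double_succ k : 'C(k.*2.+2, k.+1) = 2 * 'C(k.*2.+1, k.+1).
Proof.
have sym : 'C(k.*2.+1, k) = 'C(k.*2.+1, k.+1).
  have k_le : k.+1 <= k.*2.+1 by rewrite ltnS -addnn leq_addr.
  by rewrite -(bin_sub k_le) subSS -addnn addnK.
by rewrite binS sym addnn mul2n.
Qed.

Lemma central_bin_sq_le k : 'C(k.*2, k) ^ 2 * k.*2.+1 <= 16 ^ k.
Proof.
elim: k => [|k IH]; first by rewrite bin0.
have ratio : 'C(k.*2.+1, k.+1) * k.+1 = k.*2.+1 * 'C(k.*2, k).
  by rewrite mulnC -mul_bin_diag.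
rewrite doubleS bin_double_succ -(@leq_pmul2r (k.+1 ^ 2)) //.
have -> : (2 * 'C(k.*2.+1, k.+1)) ^ 2 * k.*2.+3 * k.+1 ^ 2
        = 4 * ('C(k.*2.+1, k.+1) * k.+1) ^ 2 * k.*2.+3 by ring.
rewrite ratio.
have -> : 4 * (k.*2.+1 * 'C(k.*2, k)) ^ 2 * k.*2.+3
        = 4 * k.*2.+1 * k.*2.+3 * ('C(k.*2, k) ^ 2 * k.*2.+1) by ring.
have le_quad : 4 * k.*2.+1 * k.*2.+3 <= 16 * k.+1 ^ 2 by nia.
by apply: leq_trans (leq_mul le_quad IH) _; rewrite mulnAC -expnS.
Qed.

Lemma bin_uphalf_sq_le m : 'C(m, uphalf m) ^ 2 * m.+1 <= 4 ^ m.
Proof.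
have pow16 k : 16 ^ k = 4 ^ k.*2 by rewrite -mul2n expnM.
rewrite -[m](odd_double_half m); set k := m./2.
case: odd; rewrite /= ?add0n ?add1n; last by rewrite uphalf_double -pow16 central_bin_sq_le.
rewrite doubleK; have := central_bin_sq_le k.+1.
rewrite doubleS bin_double_succ pow16 doubleS (expnS 4 k.*2.+1).
set D := 'C(_, _); set X := 4 ^ _; nia.
Qed.

Lemma ballot_prefix_count_sq_le m : 4 * (ballot_prefix_count m ^ 2 * m) <= 4 ^ m.
Proof.
case: m => [|m]; first by rewrite muln0.
rewrite ballot_prefix_countS (expnS 4 m) leq_pmul2l //.
exact: bin_uphalf_sq_le.
Qed.

Lemma B_le_ballot_prefix_count n a :
  a <= n -> B n <= ballot_prefix_count a * ballot_prefix_count (n - a).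
Proof.
move=> a_le_n.
pose split_rev (t : n.-tuple bool) : a.-tuple bool * (n - a).-tuple bool :=
  (insubd (nseq_tuple a false) (take a t),
   insubd (nseq_tuple (n - a) false) (rev (drop a t))).
have split_rev1 t : val (split_rev t).1 = take a t.
  by rewrite /= val_insubd size_takel ?size_tuple ?eqxx.
have split_rev2 t : val (split_rev t).2 = rev (drop a t).
  by rewrite /= val_insubd size_rev size_drop size_tuple eqxx.
have split_rev_inj : injective split_rev.
  move=> t1 t2 eq12; apply: val_inj; rewrite /= -(cat_take_drop a t1) -(cat_take_drop a t2).
  rewrite -split_rev1 -(split_rev1 t2) eq12; congr (_ ++ _).
  by apply: (can_inj revK); rewrite -split_rev2 -(split_rev2 t2) eq12.
rewrite /B -(card_imset _ split_rev_inj) -cardsX.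
apply: subset_leq_card; apply/subsetP => p /imsetP [t]; rewrite inE => /forallP t_ballot -> {p}.
have size_t := size_tuple t.
rewrite in_setX !inE; apply/andP; split; apply: pos_walk_take => k.
  rewrite split_rev1 size_takel ?size_t // => /andP [k_gt0 k_le]; rewrite take_takel //.
  have k_lt : k < (size t).+1 by lia.
  by have := t_ballot (Ordinal k_lt); rewrite /more_ones /= k_gt0 => /andP [].
rewrite split_rev2 size_rev size_drop size_t => /andP [k_gt0 k_le].
rewrite take_rev drop_drop size_drop size_t count_rev (count_rev id).
have k_lt : k < (size t).+1 by lia.
have := t_ballot (Ordinal k_lt); rewrite /more_ones /= size_t k_gt0 => /andP [_].
by rewrite (_ : n - a - k + a = n - k) //; lia.
Qed.

Lemma balanced_mul_le_exp2 x y a b :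
  0 < a -> a <= b <= a.+1 -> 4 * (x ^ 2 * a) <= 4 ^ a -> 4 * (y ^ 2 * b) <= 4 ^ b ->
  (a + b) * (x * y) <= 2 ^ (a + b).
Proof.
move=> a_gt0 /andP [a_le_b b_le_aS] x_le y_le.
have pow4 k : 4 ^ k = 2 ^ k.*2 by rewrite -mul2n expnM.
have pow4a : 4 ^ a <= 2 ^ (a + b) by rewrite pow4 leq_pexp2l // -addnn leq_add2l.
have pow4b : 4 ^ b <= 2 * 2 ^ (a + b) by rewrite pow4 -expnS leq_pexp2l //; lia.
have amgm : (a + b) * (2 * (x * y)) <= (a + b) * (x ^ 2 + y ^ 2).
  by rewrite leq_mul2l (nat_Cauchy x y).1 orbT.
have x_term : (a + b) * x ^ 2 <= 3 * (x ^ 2 * a) by nia.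
have y_term : (a + b) * y ^ 2 <= 2 * (y ^ 2 * b) by nia.
lia.
Qed.

Theorem proposition9 :
  exists (C N : nat), forall n : nat, N <= n -> n * B n <= C * 2 ^ n.
Proof.
exists 1, 2 => n n_ge2; rewrite mul1n.
have n_halves := odd_double_half n; set a := n./2 in n_halves.
have a_le_n : a <= n by lia.
have a_gt0 : 0 < a by case: odd n_halves => /=; lia.
have balanced : a <= n - a <= a.+1 by case: odd n_halves => /=; lia.
have := balanced_mul_le_exp2 _ _ _ _ a_gt0 balanced
  (ballot_prefix_count_sq_le a) (ballot_prefix_count_sq_le (n - a)).
rewrite subnKC //; apply: leq_trans.
by rewrite leq_mul2l B_le_ballot_prefix_count ?orbT.
Qed.
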